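(* Let $S$ be an intra-regular $\Gamma$-AG$^{**}$-groupoid and let $B$ be a $\Gamma$-interior ideal of $S$. Then $(S\Gamma B)\Gamma S=S\cap B=B$.
   Context: Let $S$ and $\Gamma$ be nonempty sets with a map $S\times\Gamma\times S\to S$, $(x,\gamma,y)\mapsto x\gamma y$. $S$ is a $\Gamma$-AG-groupoid if $(x\gamma y)\delta z=(z\gamma y)\delta x$ for all $x,y,z\in S$, $\gamma,\delta\in\Gamma$; it is a $\Gamma$-AG$^{**}$-groupoid if moreover $a\alpha(b\beta c)=b\alpha(a\beta c)$ for all $a,b,c\in S$, $\alpha,\beta\in\Gamma$. For subsets $A,B\subseteq S$, $A\Gamma B=\{a\gamma b: a\in A,\gamma\in\Gamma,b\in B\}$. $S$ is intra-regular if for every $a\in S$ there exist $x,y\in S$ and $\beta,\gamma,\delta\in\Gamma$ with $a=(x\beta(a\delta a))\gamma y$. A nonempty subset $B\subseteq S$ with $B\Gamma B\subseteq B$ is a $\Gamma$-interior ideal if $(S\Gamma B)\Gamma S\subseteq B$. *)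

Set Implicit Arguments.


Definition GProd {S G : Type} (op : S -> G -> S -> S) (A B : S -> Prop) : S -> Prop :=
  fun z => exists a g b, A a /\ B b /\ z = op a g b.

Definition Full {S : Type} : S -> Prop := fun _ => True.

Definition Inter {S : Type} (A B : S -> Prop) : S -> Prop := fun z => A z /\ B z.

Definition Incl {S : Type} (A B : S -> Prop) : Prop := forall z, A z -> B z.

Definition SetEq {S : Type} (A B : S -> Prop) : Prop := forall z, A z <-> B z.

Definition is_GammaAG {S G : Type} (op : S -> G -> S -> S) : Prop :=
  forall (x y z : S) (g d : G), op (op x g y) d z = op (op z g y) d x.

Definition is_GammaAGss {S G : Type} (op : S -> G -> S -> S) : Prop :=
  is_GammaAG op /\
  forall (a b c : S) (al be : G), op a al (op b be c) = op b al (op a be c).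

Definition intra_regular {S G : Type} (op : S -> G -> S -> S) : Prop :=
  forall a : S, exists (x y : S) (be ga de : G),
    a = op (op x be (op a de a)) ga y.

Definition is_interior_ideal {S G : Type} (op : S -> G -> S -> S) (B : S -> Prop) : Prop :=
  (exists b, B b) /\
  Incl (GProd op B B) B /\
  Incl (GProd op (GProd op Full B) Full) B.


(* Intra-regularity writes each a in B as (x (a a)) y, and a a lies in B
   because B is closed under products; hence B is contained in (S Γ B) Γ S.
   The reverse inclusion is the interior-ideal property. *)

Lemma intra_regular_sub_interior_product {S G : Type} {op : S -> G -> S -> S}
    {B : S -> Prop} :
  intra_regular op -> Incl (GProd op B B) B ->
  Incl B (GProd op (GProd op Full B) Full).
Proof.
  intros Hir HBB a Ba.
  destruct (Hir a) as [x [y [be [ga [de Ea]]]]].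
  assert (Baa : B (op a de a)) by (apply HBB; exists a, de, a; auto).
  exists (op x be (op a de a)), ga, y.
  repeat split; [| exact Ea].
  exists x, be, (op a de a).
  repeat split; exact Baa.
Qed.

Lemma Inter_Full_l {S : Type} (B : S -> Prop) : SetEq (Inter Full B) B.
Proof. intro z; split; [intros [_ Bz] | intro Bz; split]; easy. Qed.

Theorem mainTheorem3 (S G : Type) (op : S -> G -> S -> S)
  (HS : inhabited S) (HG : inhabited G)
  (Hag : is_GammaAGss op) (Hir : intra_regular op)
  (B : S -> Prop) (HB : is_interior_ideal op B) :
  SetEq (GProd op (GProd op Full B) Full) (Inter Full B) /\
  SetEq (Inter Full B) B.
Proof.
  destruct HB as [_ [HBB Hinterior]].
  pose proof (intra_regular_sub_interior_product Hir HBB) as Hsub.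
  split; [| apply Inter_Full_l].
  intro z; split.
  - intro Hz; apply Inter_Full_l, Hinterior, Hz.
  - intro Hz; apply Hsub, Inter_Full_l, Hz.
Qed.
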